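(* Let Assumptions A1, A2 and A3 hold. Let the maximal iteration number $T\in\mathbb{N}$ satisfy $T\le\frac{1}{2\eta\gamma^2\varepsilon^2}$, and let the step size satisfy $0<\eta\le\frac{1}{\beta^2\gamma^2}$. Assume the radius $R$ in A3 satisfies $$R\ge2\|r_0\|\max\Big(\eta\gamma\beta\big(1+2\eta\gamma^2(\varepsilon_0^2+\beta\varepsilon)T\big),\ \sqrt T\big(\sqrt\eta+\eta\gamma\sqrt T(\varepsilon+\varepsilon_0+\eta\gamma^2\beta(\varepsilon_0^2+\varepsilon\beta)T)\big)\Big).$$ Then for all $\tau\le T$: $$\|\theta_\tau-\theta_0\|\le\tfrac R2,$$ $$\|\tilde r_\tau-r_\tau\|\le2\eta\gamma^2(\varepsilon_0^2+\beta\varepsilon)\,\tau\,\|r_0\|,$$ $$\|\tilde\theta_\tau-\theta_\tau\|\le\eta\gamma\big(\varepsilon+\varepsilon_0+\eta\gamma^2\beta(\varepsilon_0^2+\varepsilon\beta)\tau\big)\tau\|r_0\|.$$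
   Context: Norms: $\|\cdot\|$ is the Euclidean norm for vectors and the spectral norm for matrices. Setting. Let $f:\mathbb{R}^N\to\mathbb{R}^n$ be continuously differentiable with Jacobian $\mathcal{J}(\theta)\in\mathbb{R}^{n\times N}$. Let $A\in\mathbb{R}^{m\times n}$ and let $\gamma\ge\|A\|$. Fix $y\in\mathbb{R}^m$, a starting point $\theta_0\in\mathbb{R}^N$, and a fixed deterministic ''reference Jacobian'' $J\in\mathbb{R}^{n\times N}$. Iterations. Gradient descent with step size $\eta>0$ is applied to $\mathcal{L}(\theta)=\frac12\|Af(\theta)-y\|^2$ and to $\mathcal{L}_{\rm lin}(\theta)=\frac12\|Af(\theta_0)+AJ(\theta-\theta_0)-y\|^2$, both started at $\theta_0=\tilde\theta_0$: $$\theta_{\tau+1}=\theta_\tau-\eta\mathcal{J}(\theta_\tau)^\top A^\top r_\tau,\qquad r_\tau:=Af(\theta_\tau)-y,$$ $$\tilde\theta_{\tau+1}=\tilde\theta_\tau-\eta J^\top A^\top\tilde r_\tau,\qquad \tilde r_\tau:=Af(\theta_0)+AJ(\tilde\theta_\tau-\theta_0)-y.$$ Assumption A1: there is $\beta>0$ with $\|J\|\le\beta$ and $\|\mathcal{J}(\theta)\|\le\beta$ for all $\theta\in\mathbb{R}^N$. Assumption A2: there is $\varepsilon_0>0$ with $\|\mathcal{J}(\theta_0)-J\|\le\varepsilon_0$ and $\|\mathcal{J}(\theta_0)\mathcal{J}(\theta_0)^\top-JJ^\top\|\le\varepsilon_0^2$. Assumption A3: there are $\varepsilon>0$ and $R>0$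 with $\|\mathcal{J}(\theta)-\mathcal{J}(\theta_0)\|\le\varepsilon/2$ for all $\theta$ satisfying $\|\theta-\theta_0\|\le R$. *)

From HB Require Import structures.
From mathcomp Require Import all_boot all_order all_algebra.
From mathcomp Require Import all_classical all_reals all_analysis.
Set Implicit Arguments. Unset Strict Implicit. Unset Printing Implicit Defensive.
Import Order.TTheory GRing.Theory Num.Theory.
Local Open Scope ring_scope.
Local Open Scope classical_set_scope.

Section Defs.
Variable R : realType.

Definition enorm (k : nat) (v : 'cV[R]_k) : R :=
  Num.sqrt (\sum_(i < k) (v i 0) ^+ 2).

Definition opnorm (p q : nat) (M : 'M[R]_(p, q)) : R :=
  sup [set enorm (M *m v) | v in [set v : 'cV[R]_q | enorm v <= 1]].

(* Gradient descent on L(theta) = 1/2 ||A f(theta) - y||^2 :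
   theta_{t+1} = theta_t - eta Jf(theta_t)^T A^T (A f(theta_t) - y). *)
Fixpoint gd_theta (N n m : nat) (f : 'cV[R]_N -> 'cV[R]_n)
    (Jf : 'cV[R]_N -> 'M[R]_(n, N)) (A : 'M[R]_(m, n)) (y : 'cV[R]_m)
    (eta : R) (theta0 : 'cV[R]_N) (t : nat) : 'cV[R]_N :=
  match t with
  | 0 => theta0
  | t'.+1 =>
      let th := gd_theta f Jf A y eta theta0 t' in
      th - eta *: ((Jf th)^T *m A^T *m (A *m f th - y))
  end.

Definition gd_res (N n m : nat) (f : 'cV[R]_N -> 'cV[R]_n)
    (Jf : 'cV[R]_N -> 'M[R]_(n, N)) (A : 'M[R]_(m, n)) (y : 'cV[R]_m)
    (eta : R) (theta0 : 'cV[R]_N) (t : nat) : 'cV[R]_m :=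
  A *m f (gd_theta f Jf A y eta theta0 t) - y.

(* Gradient descent on the linearized loss
   L_lin(theta) = 1/2 ||A f(theta0) + A J (theta - theta0) - y||^2. *)
Fixpoint lin_theta (N n m : nat) (f : 'cV[R]_N -> 'cV[R]_n)
    (J : 'M[R]_(n, N)) (A : 'M[R]_(m, n)) (y : 'cV[R]_m)
    (eta : R) (theta0 : 'cV[R]_N) (t : nat) : 'cV[R]_N :=
  match t with
  | 0 => theta0
  | t'.+1 =>
      let th := lin_theta f J A y eta theta0 t' in
      th - eta *: (J^T *m A^T *m (A *m f theta0 + A *m J *m (th - theta0) - y))
  end.

Definition lin_res (N n m : nat) (f : 'cV[R]_N -> 'cV[R]_n)
    (J : 'M[R]_(n, N)) (A : 'M[R]_(m, n)) (y : 'cV[R]_m)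
    (eta : R) (theta0 : 'cV[R]_N) (t : nat) : 'cV[R]_m :=
  A *m f theta0 + A *m J *m (lin_theta f J A y eta theta0 t - theta0) - y.

End Defs.

(* Both iterations are compared step by step as long as the gradient-descent iterate stays
   in the ball of A3, where the Jacobian is [eps/2]-close to [Jf theta0].  There the mean
   value theorem bounds the linearization error of a step, so [|r_t|^2] grows at most by the
   factor [1 + eta gamma^2 eps^2] per step (hence [|r_t| <= 2 |r_0|] for [t <= T]), the
   residual gap grows by at most [eta gamma^2 (eps0^2 + beta eps) |r_t|], and the parameter
   gap is driven by the Jacobian mismatch [J - Jf theta_t].  The linearized iteration is
   gradient descent on a quadratic whose residual never increases, and Cauchy-Schwarz along
   its path gives [|theta~_t - theta0| <= sqrt (T eta) |r_0|].  The two lower bounds on the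
   radius then keep [theta_t] and the next step inside the ball, which closes the induction. *)

From HB Require Import structures.
From mathcomp Require Import all_boot all_order all_algebra.
From mathcomp Require Import all_classical all_reals all_analysis.
From mathcomp Require Import ring lra.
Import Order.TTheory GRing.Theory Num.Theory.
Import numFieldNormedType.Exports.
Local Open Scope ring_scope.
Local Open Scope classical_set_scope.

Section EuclideanNorm.
Context {R : realType}.
Implicit Types (k : nat) (a : R).

Definition dot {k} (u v : 'cV[R]_k) : R := (u^T *m v) 0 0.

Lemma dotE {k} (u v : 'cV[R]_k) : dot u v = \sum_i u i 0 * v i 0.
Proof. by rewrite /dot mxE; apply: eq_bigr => i _; rewrite mxE. Qed.

Lemma dot_is_linear {k} (u : 'cV[R]_k) : linear (dot u).
Proof. by move=> c x z; rewrite /dot mulmxDr -scalemxAr !mxE. Qed.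

HB.instance Definition _ {k} (u : 'cV[R]_k) :=
  GRing.isLinear.Build R 'cV[R]_k R _ (dot u) (dot_is_linear u).

Lemma dotDr {k} (u v w : 'cV[R]_k) : dot u (v + w) = dot u v + dot u w.
Proof. exact: linearD. Qed.

Lemma dotBr {k} (u v w : 'cV[R]_k) : dot u (v - w) = dot u v - dot u w.
Proof. exact: linearB. Qed.

Lemma dotZr {k} (u v : 'cV[R]_k) a : dot u (a *: v) = a * dot u v.
Proof. exact: linearZ. Qed.

Lemma dotC {k} (u v : 'cV[R]_k) : dot u v = dot v u.
Proof. by rewrite !dotE; apply: eq_bigr => i _; rewrite mulrC. Qed.

Lemma dotBl {k} (u v w : 'cV[R]_k) : dot (v - w) u = dot v u - dot w u.
Proof. by rewrite !(dotC _ u) dotBr. Qed.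

Lemma dotDl {k} (u v w : 'cV[R]_k) : dot (v + w) u = dot v u + dot w u.
Proof. by rewrite !(dotC _ u) dotDr. Qed.

Lemma dotZl {k} (u v : 'cV[R]_k) a : dot (a *: v) u = a * dot v u.
Proof. by rewrite !(dotC _ u) dotZr. Qed.

Lemma dot_trmx {p q} (M : 'M[R]_(p, q)) u v : dot (M^T *m u) v = dot u (M *m v).
Proof. by rewrite /dot trmx_mul trmxK mulmxA. Qed.

Lemma dot0l {k} (u : 'cV[R]_k) : dot 0 u = 0.
Proof. by rewrite /dot trmx0 mul0mx mxE. Qed.

Lemma dotvv_ge0 {k} (v : 'cV[R]_k) : 0 <= dot v v.
Proof. by rewrite dotE sumr_ge0 // => i _; rewrite -expr2 sqr_ge0. Qed.

Lemma dotvv_eq0 {k} (u : 'cV[R]_k) : dot u u = 0 -> u = 0.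
Proof.
rewrite dotE => /psumr_eq0P u0; apply/matrixP => i j; rewrite (ord1 j) mxE.
have /(_ i isT)/eqP : forall l, true -> u l 0 * u l 0 = 0.
  by apply: u0 => l _; rewrite -expr2 sqr_ge0.
by rewrite mulf_eq0 orbb => /eqP.
Qed.

Lemma dot_differentiable {k} (u : 'cV[R]_k) x : differentiable (dot u) x.
Proof.
have -> : dot u = \sum_(i < k) (u i 0 *: (fun z : 'cV[R]_k => z i 0)).
  by rewrite fct_sumE; apply/funext => z; rewrite dotE; apply: eq_bigr.
by apply: differentiable_sum => i; apply/differentiableZ/differentiable_coord.
Qed.

Lemma diff_dot {k} (u : 'cV[R]_k) x : 'd (dot u) x = dot u :> (_ -> _).
Proof.
have dot_cont : continuous (dot u).
  by move=> z; apply/differentiable_continuous/dot_differentiable.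
exact: (@diff_lin R _ _ (dot u) x dot_cont).
Qed.

Lemma enormE {k} (v : 'cV[R]_k) : enorm v = Num.sqrt (dot v v).
Proof. by rewrite /enorm dotE; congr Num.sqrt; apply: eq_bigr => i _; rewrite expr2. Qed.

Lemma enorm_ge0 {k} (v : 'cV[R]_k) : 0 <= enorm v.
Proof. by rewrite enormE sqrtr_ge0. Qed.

Lemma enorm_sqr {k} (v : 'cV[R]_k) : enorm v ^+ 2 = dot v v.
Proof. by rewrite enormE sqr_sqrtr // dotvv_ge0. Qed.

Lemma enorm_eq0 {k} {u : 'cV[R]_k} : enorm u = 0 -> u = 0.
Proof. by move=> u0; apply: dotvv_eq0; rewrite -enorm_sqr u0 expr0n. Qed.

Lemma enorm0 {k} : enorm (0 : 'cV[R]_k) = 0.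
Proof. by rewrite enormE dot0l sqrtr0. Qed.

Lemma enormZ {k} (u : 'cV[R]_k) a : enorm (a *: u) = `|a| * enorm u.
Proof. by rewrite !enormE dotZl dotZr mulrA -expr2 sqrtrM ?sqr_ge0 // sqrtr_sqr. Qed.

Lemma enormN {k} (u : 'cV[R]_k) : enorm (- u) = enorm u.
Proof. by rewrite -scaleN1r enormZ normrN normr1 mul1r. Qed.

Lemma enorm_coord_le {k} (v : 'cV[R]_k) i : `|v i 0| <= enorm v.
Proof.
rewrite -ler_sqr ?nnegrE ?enorm_ge0 // real_normK ?num_real //.
rewrite /enorm sqr_sqrtr ?sumr_ge0 // => [|j _]; last exact: sqr_ge0.
by rewrite (bigD1 i) //= lerDl sumr_ge0 // => j _; exact: sqr_ge0.
Qed.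

Lemma enorm_le_of_sqr {k} (v : 'cV[R]_k) c :
  0 <= c -> enorm v ^+ 2 <= enorm v * c -> enorm v <= c.
Proof.
move=> c0; have [->|v0] := eqVneq (enorm v) 0; first by [].
by rewrite expr2 ler_pM2l // lt_def v0 enorm_ge0.
Qed.

Lemma cauchy_schwarz {k} (u v : 'cV[R]_k) : dot u v <= enorm u * enorm v.
Proof.
have [u0|u0] := eqVneq (enorm u) 0.
  by rewrite (enorm_eq0 u0) dot0l enorm0 mul0r.
have [v0|v0] := eqVneq (enorm v) 0.
  by rewrite (enorm_eq0 v0) dotC dot0l enorm0 mulr0.
have uv_gt0 : 0 < enorm u * enorm v.
  by rewrite mulr_gt0 // lt_def ?u0 ?v0 enorm_ge0.
have := dotvv_ge0 (enorm v *: u - enorm u *: v).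
rewrite !(dotBl, dotBr, dotZl, dotZr) (dotC v u) -!enorm_sqr.
move=> expand; rewrite -(ler_pM2l uv_gt0); nra.
Qed.

Lemma enorm_sqrB {k} (u v : 'cV[R]_k) :
  enorm (u - v) ^+ 2 = enorm u ^+ 2 - 2 * dot u v + enorm v ^+ 2.
Proof. by rewrite !enorm_sqr dotBl !dotBr (dotC v u); ring. Qed.

Lemma ler_enormD {k} (u v : 'cV[R]_k) : enorm (u + v) <= enorm u + enorm v.
Proof.
rewrite -ler_sqr ?nnegrE ?addr_ge0 ?enorm_ge0 // !enorm_sqr dotDl !dotDr.
rewrite (dotC v u) -!enorm_sqr; have := cauchy_schwarz u v; nra.
Qed.

Lemma ler_enormB {k} (u v : 'cV[R]_k) : enorm (u - v) <= enorm u + enorm v.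
Proof. by rewrite -(enormN v) ler_enormD. Qed.

Lemma enorm_segment_le {k} (a b c : 'cV[R]_k) (ra rb s : R) :
  enorm (a - c) <= ra -> enorm (b - a) <= rb -> 0 <= s <= 1 ->
  enorm (a + s *: (b - a) - c) <= ra + rb.
Proof.
move=> ac ba /andP[s0 s1]; rewrite addrAC (le_trans (ler_enormD _ _)) // enormZ ger0_norm //.
by rewrite lerD // (le_trans _ ba) // ler_piMl ?enorm_ge0.
Qed.

End EuclideanNorm.

Section OperatorBound.
Context {R : realType}.

Definition mx_bound {p q} (M : 'M[R]_(p, q)) (c : R) :=
  forall v, enorm (M *m v) <= c * enorm v.

Lemma opnorm_has_ubound {p q} (M : 'M[R]_(p, q)) :
  has_ubound [set enorm (M *m v) | v in [set v : 'cV[R]_q | enorm v <= 1]].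
Proof.
exists (Num.sqrt (\sum_i (\sum_j `|M i j|) ^+ 2)) => _ [w /= w1 <-].
apply: ler_wsqrtr; apply: ler_sum => i _.
rewrite -real_normK ?num_real // ler_sqr ?nnegrE ?sumr_ge0 //.
rewrite mxE (le_trans (ler_norm_sum _ _ _)) //.
by apply: ler_sum => j _; rewrite normrM ler_piMr // (le_trans (enorm_coord_le _ _)).
Qed.

Lemma opnorm_ge0 {p q} (M : 'M[R]_(p, q)) : 0 <= opnorm M.
Proof.
apply: (ub_le_sup (opnorm_has_ubound M)).
by exists 0; rewrite /= ?mulmx0 enorm0 ?ler01.
Qed.

Lemma opnorm_bound {p q} {M : 'M[R]_(p, q)} {c} : opnorm M <= c -> mx_bound M c.
Proof.
move=> Mc v; have [v0|v0] := eqVneq (enorm v) 0.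
  by rewrite (enorm_eq0 v0) mulmx0 !enorm0 mulr0.
have v_gt0 : 0 < enorm v by rewrite lt_def v0 enorm_ge0.
have : enorm (M *m ((enorm v)^-1 *: v)) <= opnorm M.
  apply: (ub_le_sup (opnorm_has_ubound M)); exists ((enorm v)^-1 *: v) => //=.
  by rewrite enormZ ger0_norm ?invr_ge0 ?enorm_ge0 // mulVf.
rewrite -scalemxAr enormZ ger0_norm ?invr_ge0 ?enorm_ge0 // => /le_trans/(_ Mc).
by rewrite mulrC ler_pdivrMr // mulrC.
Qed.

Lemma mx_bound_le {p q} {M : 'M[R]_(p, q)} {a b} :
  a <= b -> mx_bound M a -> mx_bound M b.
Proof. by move=> ab Ma v; rewrite (le_trans (Ma v)) // ler_wpM2r ?enorm_ge0. Qed.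

Lemma mx_bound_tr {p q} {M : 'M[R]_(p, q)} {c} : 0 <= c -> mx_bound M c -> mx_bound M^T c.
Proof.
move=> c0 Mc u; rewrite mulrC; apply: enorm_le_of_sqr; first by rewrite mulr_ge0 ?enorm_ge0.
rewrite enorm_sqr dot_trmx (le_trans (cauchy_schwarz _ _)) //.
by rewrite mulrCA ler_wpM2l ?enorm_ge0 // mulrC Mc.
Qed.

Lemma mx_bound_mul {p q s} {A : 'M[R]_(p, q)} {B : 'M[R]_(q, s)} {a b} :
  0 <= a -> mx_bound A a -> mx_bound B b -> mx_bound (A *m B) (a * b).
Proof. by move=> a0 Aa Bb v; rewrite -mulmxA (le_trans (Aa _)) // -mulrA ler_wpM2l. Qed.

Lemma mx_boundN {p q} {M : 'M[R]_(p, q)} {c} : mx_bound M c -> mx_bound (- M) c.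
Proof. by move=> Mc v; rewrite mulNmx enormN. Qed.

Lemma mx_boundD {p q} {M N : 'M[R]_(p, q)} {a b} :
  mx_bound M a -> mx_bound N b -> mx_bound (M + N) (a + b).
Proof. by move=> Ma Nb v; rewrite mulmxDl mulrDl (le_trans (ler_enormD _ _)) ?lerD. Qed.

Lemma mx_boundB {p q} {M N : 'M[R]_(p, q)} {a b} :
  mx_bound M a -> mx_bound N b -> mx_bound (M - N) (a + b).
Proof. by move=> Ma Nb v; rewrite mulmxBl mulrDl (le_trans (ler_enormB _ _)) ?lerD. Qed.

Lemma enorm_sqr_gradient_step {p q} {B : 'M[R]_(p, q)} {b eta} r :
  mx_bound B b -> 0 <= eta -> eta * b ^+ 2 <= 1 ->
  enorm (r - eta *: (B *m (B^T *m r))) ^+ 2 <=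
    enorm r ^+ 2 - eta * enorm (B^T *m r) ^+ 2.
Proof.
move=> Bb eta0 eta_b; set g := B^T *m r.
rewrite enorm_sqrB dotZr enormZ -dot_trmx -/g -enorm_sqr ger0_norm //.
have Bg : enorm (B *m g) ^+ 2 <= b ^+ 2 * enorm g ^+ 2.
  by rewrite -exprMn ler_sqr ?nnegrE ?enorm_ge0 ?(le_trans _ (Bb g)) ?enorm_ge0.
have : eta ^+ 2 * enorm (B *m g) ^+ 2 <= eta * enorm g ^+ 2.
  apply: (le_trans (ler_wpM2l (sqr_ge0 eta) Bg)).
  have := mulr_ge0 eta0 (sqr_ge0 (enorm g)); nra.
rewrite exprMn; lra.
Qed.

Lemma subrBB (V : zmodType) (a b x y : V) : (a - x) - (b - y) = (a - b) - (x - y).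
Proof. by rewrite !opprB addrACA [RHS]addrACA (addrC (- b)). Qed.

Lemma trmx_mulmxBB {p q s} (B C : 'M[R]_(p, q)) (a b : 'M[R]_(p, s)) :
  B^T *m a - C^T *m b = (B - C)^T *m a + C^T *m (a - b).
Proof. by rewrite linearB mulmxBl mulmxBr addrA subrK. Qed.

(* Splits the residual gap into a contracting descent step and the mismatch of the Gram
   matrices. *)
Lemma descent_stepB {p q} (M : 'M[R]_(p, q)) (Q : 'M[R]_p) (u v w : 'cV[R]_p) eta :
  (u - eta *: (M *m (M^T *m u))) - (v - eta *: (Q *m v) + w) =
  (u - v) - eta *: (M *m (M^T *m (u - v))) + eta *: ((Q - M *m M^T) *m v) - w.
Proof.
rewrite !mulmxBr mulmxBl !mulmxA.
by apply/matrixP => i j; rewrite !mxE; ring.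
Qed.

End OperatorBound.

Section MeanValue.
Context {R : realType}.

Lemma difference_quotient_line {V : normedModType R} (g : V -> R) (a d : V) (t : R) :
  (fun h : R => h^-1 *: (((fun s : R => g (a + s *: d)) \o shift t) (h *: 1)
      - g (a + t *: d))) =
  (fun h : R => h^-1 *: ((g \o shift (a + t *: d)) (h *: d) - g (a + t *: d))).
Proof.
apply/funext => h /=; congr (_ *: (g _ - _)).
by rewrite /shift /= scalerDl [h *: 1]mulr1 addrCA addrA.
Qed.

Lemma derive_line {V : normedModType R} (g : V -> R) (a d : V) (t : R) :
  'D_1 (fun s : R => g (a + s *: d)) t = 'D_d g (a + t *: d).
Proof. by rewrite /derive difference_quotient_line. Qed.

Lemma derivable_line {V : normedModType R} (g : V -> R) (a d : V) (t : R) :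
  derivable g (a + t *: d) d -> derivable (fun s : R => g (a + s *: d)) t 1.
Proof. by rewrite /derivable difference_quotient_line. Qed.

(* The scalar mean value theorem applied to [s |-> <w, f x_s> - <K^T w, x_s>] on the segment
   [x_s = a + s (b - a)], where [w] is the error vector itself. *)
Lemma linearization_error_le {N n} (f : 'cV[R]_N -> 'cV[R]_n)
    (Jf : 'cV[R]_N -> 'M[R]_(n, N)) (K : 'M[R]_(n, N)) (a b : 'cV[R]_N) (L : R) :
  (forall th, differentiable f th) -> (forall th v, 'd f th v = Jf th *m v) ->
  0 <= L -> (forall s, 0 <= s <= 1 -> mx_bound (Jf (a + s *: (b - a)) - K) L) ->
  enorm (f b - f a - K *m (b - a)) <= L * enorm (b - a).
Proof.
move=> fd df L0 JK; set w := f b - f a - K *m (b - a).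
pose g := (dot w \o f) - dot (K^T *m w).
have dot_wf z : differentiable (dot w \o f) z.
  by apply: differentiable_comp => //; exact: dot_differentiable.
have g_diff z : differentiable g z.
  by apply: differentiableB => //; exact: dot_differentiable.
have dg z v : 'd g z v = dot w ((Jf z - K) *m v).
  rewrite /g diffB //; last exact: dot_differentiable.
  rewrite /= diff_comp //; last exact: dot_differentiable.
  by rewrite /= !diff_dot df dot_trmx mulmxBl dotBr.
pose phi s := g (a + s *: (b - a)).
pose dphi s := dot w ((Jf (a + s *: (b - a)) - K) *m (b - a)).
have phi_derive s : is_derive s (1 : R) phi (dphi s).
  apply: DeriveDef; first by apply/derivable_line/diff_derivable.
  by rewrite derive_line deriveE // dg.
have [c c01 phi_mvt] := MVT_segment (f := phi) (df := dphi) ler01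
  (fun x _ => phi_derive x)
  (derivable_within_continuous (fun x _ => @ex_derive _ _ _ _ _ _ _ (phi_derive x))).
have phi10 : phi 1 - phi 0 = enorm w ^+ 2.
  have gE z : g z = dot w (f z) - dot (K^T *m w) z by [].
  rewrite /phi !gE scale1r scale0r addr0 [a + _]addrC subrK.
  by rewrite enorm_sqr !dot_trmx /w !dotBr; ring.
apply: enorm_le_of_sqr; first by rewrite mulr_ge0 ?enorm_ge0.
rewrite -phi10 phi_mvt subr0 mulr1 (le_trans (cauchy_schwarz _ _)) //.
by rewrite ler_wpM2l ?enorm_ge0 // JK //; move: c01; rewrite in_itv.
Qed.

End MeanValue.

Section ScalarEstimates.
Context {R : realType}.

Lemma expr1D_mul_le1 (x : R) (t : nat) : 0 <= x -> (1 + x) ^+ t * (1 - x * t%:R) <= 1.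
Proof.
move=> x0; elim: t => [|t IH]; first by rewrite expr0 mulr0 subr0 mulr1.
have p0 : 0 <= (1 + x) ^+ t by rewrite exprn_ge0 // addr_ge0.
have : (1 + x) * (1 - x * (t%:R + 1)) <= 1 - x * t%:R.
  have : 0 <= x ^+ 2 * (t%:R + 1) by rewrite mulr_ge0 ?sqr_ge0 // addr_ge0.
  nra.
rewrite exprS -natr1 => h; have := ler_wpM2l p0 h; nra.
Qed.

Lemma expr1D_le2 {x : R} {t T : nat} : 0 <= x -> 2 * x * T%:R <= 1 -> (t <= T)%N ->
  (1 + x) ^+ t <= 2.
Proof.
move=> x0 xT tT; have xt : x * t%:R <= 1 / 2.
  have : t%:R <= T%:R :> R by rewrite ler_nat.
  by rewrite ler_pdivlMr // => /(ler_wpM2l x0); lra.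
have := expr1D_mul_le1 x t x0; have : 0 <= (1 + x) ^+ t by rewrite exprn_ge0 // addr_ge0.
nra.
Qed.

(* The decrease [eta q^2] absorbs the cross term of the perturbation [z eta q]. *)
Lemma sqr_descent_perturb_le (s q a z eta : R) : 0 <= s -> 0 <= q -> 0 <= eta ->
  s ^+ 2 <= a ^+ 2 - eta * q ^+ 2 ->
  (s + z * eta * q) ^+ 2 <= (1 + eta * z ^+ 2) * a ^+ 2.
Proof.
move=> s0 q0 eta0 sa.
have : 0 <= eta * (q - z * s) ^+ 2 by rewrite mulr_ge0 ?sqr_ge0.
have : 0 <= eta * z ^+ 2 by rewrite mulr_ge0 ?sqr_ge0.
nra.
Qed.

(* Inductive step of [(sum_(i < t) eta q_i)^2 <= t eta sum_(i < t) eta q_i^2]. *)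
Lemma sqr_sum_step_le (s q t eta D D' : R) : 0 <= s -> 0 <= q -> 0 <= eta -> 0 <= t ->
  0 <= D -> s ^+ 2 <= t * eta * D -> D + eta * q ^+ 2 <= D' ->
  (s + eta * q) ^+ 2 <= (t + 1) * eta * D'.
Proof.
move=> s0 q0 eta0 t0 D0 sD DD'.
apply: (@le_trans _ _ ((t + 1) * eta * (D + eta * q ^+ 2))); last first.
  by rewrite ler_wpM2l // mulr_ge0 // addr_ge0.
have [t_eq0|t_neq0] := eqVneq t 0.
  rewrite t_eq0 !mul0r in sD *.
  have -> : s = 0 by apply/eqP; rewrite -sqrf_eq0 eq_le sqr_ge0 andbT.
  have : 0 <= eta * D by rewrite mulr_ge0.
  nra.
have t_gt0 : 0 < t by rewrite lt_def t_neq0.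
rewrite -(ler_pM2l t_gt0).
have : 0 <= (s - t * eta * q) ^+ 2 by rewrite sqr_ge0.
have : 0 <= t * eta * D by rewrite !mulr_ge0.
have : 0 <= eta * D by rewrite !mulr_ge0.
have : 0 <= t * (eta * D) by rewrite !mulr_ge0.
nra.
Qed.

End ScalarEstimates.

Section GradientDescent.
Context {R : realType} {N n m : nat}.
Context {f : 'cV[R]_N -> 'cV[R]_n} {Jf : 'cV[R]_N -> 'M[R]_(n, N)}
  {A : 'M[R]_(m, n)} {y : 'cV[R]_m} {theta0 : 'cV[R]_N} {J : 'M[R]_(n, N)}
  {gamma beta eta eps0 eps : R}.
Hypotheses (f_diff : forall th, differentiable f th)
  (df : forall th v, 'd f th v = Jf th *m v).
Hypotheses (gamma_ge0 : 0 <= gamma) (beta_ge0 : 0 <= beta) (eta_ge0 : 0 <= eta)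
  (eps0_ge0 : 0 <= eps0) (eps_ge0 : 0 <= eps).
Hypotheses (A_bound : mx_bound A gamma) (J_bound : mx_bound J beta)
  (Jf_bound : forall th, mx_bound (Jf th) beta).
Hypotheses (J0_bound : mx_bound (Jf theta0 - J) eps0)
  (JJ0_bound : mx_bound (Jf theta0 *m (Jf theta0)^T - J *m J^T) (eps0 ^+ 2)).
Hypothesis step_size : eta * beta ^+ 2 * gamma ^+ 2 <= 1.

Local Notation th := (gd_theta f Jf A y eta theta0).
Local Notation thl := (lin_theta f J A y eta theta0).
Local Notation r := (gd_res f Jf A y eta theta0).
Local Notation rl := (lin_res f J A y eta theta0).
Local Notation grad t := ((A *m Jf (th t))^T *m r t).

Lemma step_size_prod : eta * (gamma * beta) ^+ 2 <= 1.
Proof. by rewrite exprMn mulrA mulrAC. Qed.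

Lemma lin_thetaS t : thl t.+1 = thl t - eta *: ((A *m J)^T *m rl t).
Proof. by rewrite trmx_mul. Qed.

Lemma lin_resS t : rl t.+1 = rl t - eta *: (A *m J *m ((A *m J)^T *m rl t)).
Proof.
rewrite {1}/lin_res lin_thetaS (addrAC (thl t)) mulmxBr -scalemxAr !mulmxA.
by rewrite addrA (addrAC _ (- _) (- y)).
Qed.

Lemma lin_res_sqrS t :
  enorm (rl t.+1) ^+ 2 <= enorm (rl t) ^+ 2 - eta * enorm ((A *m J)^T *m rl t) ^+ 2.
Proof.
rewrite lin_resS; apply: enorm_sqr_gradient_step eta_ge0 step_size_prod.
exact: mx_bound_mul gamma_ge0 A_bound J_bound.
Qed.

Lemma lin_res_sqr_le t : enorm (rl t) ^+ 2 <= enorm (rl 0) ^+ 2.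
Proof.
elim: t => // t IH; apply: le_trans IH; apply: (le_trans (lin_res_sqrS t)).
by rewrite gerDl oppr_le0 mulr_ge0 ?sqr_ge0.
Qed.

Lemma lin_theta_dist_sqr t :
  enorm (thl t - theta0) ^+ 2 <= t%:R * eta * (enorm (rl 0) ^+ 2 - enorm (rl t) ^+ 2).
Proof.
elim: t => [|t IH]; first by rewrite subrr enorm0 expr0n /= mul0r mul0r.
set q := enorm ((A *m J)^T *m rl t).
have step : enorm (thl t.+1 - theta0) <= enorm (thl t - theta0) + eta * q.
  by rewrite lin_thetaS addrAC (le_trans (ler_enormB _ _)) // enormZ ger0_norm.
apply: (le_trans (_ : _ <= (enorm (thl t - theta0) + eta * q) ^+ 2)).
  by rewrite ler_sqr ?nnegrE ?addr_ge0 ?mulr_ge0 ?enorm_ge0.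
rewrite -natr1; apply: sqr_sum_step_le IH _; rewrite ?enorm_ge0 ?ler0n ?subr_ge0 //.
  exact: lin_res_sqr_le.
by have := lin_res_sqrS t; rewrite -/q; lra.
Qed.

Lemma lin_res0 : rl 0 = r 0.
Proof. by rewrite /lin_res /gd_res /= subrr mulmx0 addr0. Qed.

Lemma gd_thetaS t : th t.+1 = th t - eta *: grad t.
Proof. by rewrite trmx_mul. Qed.

Lemma gd_stepE t : th t.+1 - th t = - (eta *: grad t).
Proof. by rewrite gd_thetaS addrAC subrr add0r. Qed.

Lemma gd_grad_le t : enorm (grad t) <= gamma * beta * enorm (r t).
Proof.
apply: mx_bound_tr; first exact: mulr_ge0.
exact: mx_bound_mul gamma_ge0 A_bound (Jf_bound _).
Qed.

Lemma gd_step_le t : enorm (th t.+1 - th t) <= eta * gamma * beta * enorm (r t).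
Proof.
by rewrite gd_stepE enormN enormZ ger0_norm // -!mulrA ler_wpM2l // mulrA gd_grad_le.
Qed.

Definition jacobian_close_on_step t := forall s, 0 <= s <= 1 ->
  mx_bound (Jf (th t + s *: (th t.+1 - th t)) - Jf theta0) (eps / 2).

Lemma jacobian_close_start {t} : jacobian_close_on_step t ->
  mx_bound (Jf (th t) - Jf theta0) (eps / 2).
Proof. by move=> close; have := close 0; rewrite scale0r addr0 lexx ler01; apply. Qed.

Lemma gd_linearization_le {t} : jacobian_close_on_step t ->
  enorm (f (th t.+1) - f (th t) - Jf (th t) *m (th t.+1 - th t))
    <= eps * enorm (th t.+1 - th t).
Proof.
move=> close; apply: linearization_error_le => // s s01.
have := mx_boundB (close s s01) (jacobian_close_start close).
by rewrite opprB addrA subrK; apply: mx_bound_le; lra.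
Qed.

Lemma gd_linearization0_le {t} : jacobian_close_on_step t ->
  enorm (f (th t.+1) - f (th t) - Jf theta0 *m (th t.+1 - th t))
    <= eps / 2 * enorm (th t.+1 - th t).
Proof. by move=> close; apply: linearization_error_le => //; rewrite divr_ge0. Qed.

Lemma gd_resS t : r t.+1 = r t + A *m (f (th t.+1) - f (th t)).
Proof. by rewrite /gd_res mulmxBr [RHS]addrC addrA subrK. Qed.

Lemma gd_resS_linearized t (K : 'M[R]_(n, N)) :
  r t.+1 = r t - eta *: (A *m K *m grad t)
           + A *m (f (th t.+1) - f (th t) - K *m (th t.+1 - th t)).
Proof.
set g := grad t; rewrite gd_resS gd_stepE -/g mulmxN opprK [in RHS]mulmxDr.
by rewrite -!scalemxAr mulmxA addrACA addNr addr0.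
Qed.

Lemma gd_res_sqrS {t} : jacobian_close_on_step t ->
  enorm (r t.+1) ^+ 2 <= (1 + eta * gamma ^+ 2 * eps ^+ 2) * enorm (r t) ^+ 2.
Proof.
move=> close; set g := grad t.
set e := f (th t.+1) - f (th t) - Jf (th t) *m (th t.+1 - th t).
have descent := enorm_sqr_gradient_step (r t)
  (mx_bound_mul gamma_ge0 A_bound (Jf_bound (th t))) eta_ge0.
have e_le : enorm (A *m e) <= gamma * eps * eta * enorm g.
  apply: (le_trans (A_bound e)); rewrite -!mulrA ler_wpM2l //.
  by rewrite (le_trans (gd_linearization_le close)) // gd_stepE enormN enormZ ger0_norm.
apply: (le_trans (_ : _ <= (enorm (r t - eta *: (A *m Jf (th t) *m g))
                            + gamma * eps * eta * enorm g) ^+ 2)).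
  rewrite ler_sqr ?nnegrE ?enorm_ge0 ?addr_ge0 ?mulr_ge0 ?enorm_ge0 //.
  by rewrite (gd_resS_linearized t (Jf (th t))) (le_trans (ler_enormD _ _)) // lerD2l.
rewrite (_ : eta * gamma ^+ 2 * eps ^+ 2 = eta * (gamma * eps) ^+ 2); last by ring.
apply: sqr_descent_perturb_le; rewrite ?enorm_ge0 //.
exact: descent step_size_prod.
Qed.

Lemma jacobian_gram_gap_bound {x} : mx_bound (Jf x - Jf theta0) (eps / 2) ->
  mx_bound (Jf theta0 *m (Jf x)^T - J *m J^T) (eps0 ^+ 2 + beta * (eps / 2)).
Proof.
move=> close; have -> : Jf theta0 *m (Jf x)^T - J *m J^T =
    (Jf theta0 *m (Jf theta0)^T - J *m J^T) + Jf theta0 *m (Jf x - Jf theta0)^T.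
  by rewrite linearB /= mulmxBr addrAC addrCA subrr addr0.
apply: mx_boundD JJ0_bound (mx_bound_mul beta_ge0 (Jf_bound _) (mx_bound_tr _ close)).
by rewrite divr_ge0.
Qed.

Lemma res_gapE t :
  rl t.+1 - r t.+1 = (rl t - r t) - eta *: (A *m J *m ((A *m J)^T *m (rl t - r t)))
    + eta *: (A *m (Jf theta0 *m (Jf (th t))^T - J *m J^T) *m A^T *m r t)
    - A *m (f (th t.+1) - f (th t) - Jf theta0 *m (th t.+1 - th t)).
Proof.
have := descent_stepB (A *m J) (A *m Jf theta0 *m (A *m Jf (th t))^T)
  (rl t) (r t) (A *m (f (th t.+1) - f (th t) - Jf theta0 *m (th t.+1 - th t))) eta.
rewrite -[A *m Jf theta0 *m _ *m r t]mulmxA -lin_resS.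
rewrite -(gd_resS_linearized t (Jf theta0)) => ->.
by congr (_ + _ *: (_ *m _) - _); rewrite !trmx_mul mulmxBr mulmxBl !mulmxA.
Qed.

Lemma res_gapS {t} : jacobian_close_on_step t ->
  enorm (rl t.+1 - r t.+1)
    <= enorm (rl t - r t) + eta * gamma ^+ 2 * (eps0 ^+ 2 + beta * eps) * enorm (r t).
Proof.
move=> close; rewrite res_gapE.
set e := f (th t.+1) - f (th t) - Jf theta0 *m (th t.+1 - th t).
set P := Jf theta0 *m (Jf (th t))^T - J *m J^T.
set d := rl t - r t.
have d_le : enorm (d - eta *: (A *m J *m ((A *m J)^T *m d))) <= enorm d.
  rewrite -ler_sqr ?nnegrE ?enorm_ge0 //.
  have AJ_bound := mx_bound_mul gamma_ge0 A_bound J_bound.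
  apply: (le_trans (enorm_sqr_gradient_step d AJ_bound eta_ge0 step_size_prod)).
  by rewrite gerDl oppr_le0 mulr_ge0 ?sqr_ge0.
have P_bound : mx_bound (A *m P *m A^T) (gamma * (eps0 ^+ 2 + beta * (eps / 2)) * gamma).
  apply: mx_bound_mul; [|apply: mx_bound_mul gamma_ge0 A_bound _|exact: mx_bound_tr].
    by rewrite mulr_ge0 // addr_ge0 ?sqr_ge0 // mulr_ge0 // divr_ge0.
  exact: jacobian_gram_gap_bound (jacobian_close_start close).
have e_le : enorm (A *m e) <= gamma * (eps / 2 * (eta * gamma * beta * enorm (r t))).
  apply: (le_trans (A_bound e)); rewrite ler_wpM2l //.
  rewrite (le_trans (gd_linearization0_le close)) // ler_wpM2l ?divr_ge0 //.
  exact: gd_step_le.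
rewrite (le_trans (ler_enormB _ _)) //.
apply: (le_trans (lerD (ler_enormD _ _) (lexx _))); rewrite enormZ ger0_norm //.
apply: (le_trans (lerD (lerD d_le (ler_wpM2l eta_ge0 (P_bound (r t)))) e_le)).
have -> : eta * gamma ^+ 2 * (eps0 ^+ 2 + beta * eps) * enorm (r t) =
  eta * (gamma * (eps0 ^+ 2 + beta * (eps / 2)) * gamma * enorm (r t))
  + gamma * (eps / 2 * (eta * gamma * beta * enorm (r t))) by field.
by rewrite addrA.
Qed.

Lemma jacobian_ref_gap_bound {x} : mx_bound (Jf x - Jf theta0) (eps / 2) ->
  mx_bound (J - Jf x) (eps0 + eps / 2).
Proof.
move=> close; have -> : J - Jf x = - ((Jf x - Jf theta0) + (Jf theta0 - J)).
  by rewrite addrA subrK opprB.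
by rewrite [eps0 + _]addrC; exact: mx_boundN (mx_boundD close J0_bound).
Qed.

Lemma theta_gapS {t} : mx_bound (Jf (th t) - Jf theta0) (eps / 2) ->
  enorm (thl t.+1 - th t.+1) <= enorm (thl t - th t)
    + eta * ((eps0 + eps / 2) * (gamma * enorm (rl t)) + beta * (gamma * enorm (rl t - r t))).
Proof.
move=> close.
rewrite lin_thetaS gd_thetaS subrBB -scalerBr !trmx_mul -!mulmxA trmx_mulmxBB.
rewrite (le_trans (ler_enormB _ _)) // lerD2l enormZ ger0_norm // ler_wpM2l //.
rewrite (le_trans (ler_enormD _ _)) // lerD //.
  apply: (le_trans (mx_bound_tr _ (jacobian_ref_gap_bound close) _)).
    by rewrite addr_ge0 // divr_ge0.
  by rewrite ler_wpM2l ?addr_ge0 ?divr_ge0 // mx_bound_tr.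
apply: (le_trans (mx_bound_tr beta_ge0 (Jf_bound _) _)).
by rewrite -mulmxBr ler_wpM2l // mx_bound_tr.
Qed.

Context {T : nat} {Rad : R}.
Hypothesis Jf_close :
  forall x, enorm (x - theta0) <= Rad -> mx_bound (Jf x - Jf theta0) (eps / 2).
Hypothesis horizon : 2 * eta * gamma ^+ 2 * eps ^+ 2 * T%:R <= 1.

Local Notation r0 := (enorm (r 0)).
Local Notation res_gap_bound t :=
  (2 * eta * gamma ^+ 2 * (eps0 ^+ 2 + beta * eps) * t%:R * r0).
Local Notation theta_gap_bound t :=
  (eta * gamma * (eps + eps0 + eta * gamma ^+ 2 * beta * (eps0 ^+ 2 + eps * beta) * t%:R)
     * t%:R * r0).

Hypothesis radius_step :
  2 * (eta * gamma * beta * (1 + 2 * eta * gamma ^+ 2 * (eps0 ^+ 2 + beta * eps) * T%:R) * r0)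
    <= Rad.
Hypothesis radius_path : 2 * (Num.sqrt (T%:R * eta) * r0 + theta_gap_bound T) <= Rad.

Lemma theta_gap_bound_le {t} : (t <= T)%N -> theta_gap_bound t <= theta_gap_bound T.
Proof.
move=> tT; have tT' : t%:R <= T%:R :> R by rewrite ler_nat.
set K := eta * gamma ^+ 2 * beta * (eps0 ^+ 2 + eps * beta).
have K0 : 0 <= K by rewrite !mulr_ge0 ?sqr_ge0 // addr_ge0 ?sqr_ge0 // mulr_ge0.
rewrite ler_wpM2r ?enorm_ge0 // -!(mulrA (eta * gamma)) ler_wpM2l ?mulr_ge0 //.
apply: ler_pM => //; first by rewrite !addr_ge0 // mulr_ge0.
by rewrite lerD2l ler_wpM2l.
Qed.

Lemma lin_theta_dist_le {t} : (t <= T)%N -> enorm (thl t - theta0) <= Num.sqrt (T%:R * eta) * r0.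
Proof.
move=> tT; have rl_le : enorm (rl t) ^+ 2 <= r0 ^+ 2 by rewrite -lin_res0 lin_res_sqr_le.
have dist2 : enorm (thl t - theta0) ^+ 2 <= (Num.sqrt (T%:R * eta) * r0) ^+ 2.
  rewrite exprMn (@sqr_sqrtr _ (T%:R * eta)) ?mulr_ge0 //.
  apply: (le_trans (lin_theta_dist_sqr t)).
  rewrite lin_res0 -!mulrA ler_pM ?ler_nat ?mulr_ge0 ?subr_ge0 //.
  by rewrite ler_wpM2l // gerDl oppr_le0 sqr_ge0.
by rewrite -ler_sqr ?nnegrE ?mulr_ge0 ?sqrtr_ge0 ?enorm_ge0.
Qed.

Lemma gd_theta_near {t} : (t <= T)%N -> enorm (thl t - th t) <= theta_gap_bound t ->
  enorm (th t - theta0) <= Rad / 2.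
Proof.
move=> tT gap; have -> : th t - theta0 = (thl t - theta0) - (thl t - th t).
  by rewrite opprB [RHS]addrC addrA subrK.
apply: (le_trans (ler_enormB _ _)).
have := lerD (lin_theta_dist_le tT) (le_trans gap (theta_gap_bound_le tT)).
move: radius_path; lra.
Qed.

Lemma gd_res_le {t} : (t <= T)%N -> enorm (rl t - r t) <= res_gap_bound t ->
  enorm (r t) <= (1 + 2 * eta * gamma ^+ 2 * (eps0 ^+ 2 + beta * eps) * T%:R) * r0.
Proof.
move=> tT gap; have -> : r t = rl t - (rl t - r t) by rewrite opprB [RHS]addrC subrK.
apply: (le_trans (ler_enormB _ _)).
have rl_le : enorm (rl t) <= r0.
  by rewrite -ler_sqr ?nnegrE ?enorm_ge0 // -lin_res0 lin_res_sqr_le.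
have gapT : res_gap_bound t <= res_gap_bound T.
  rewrite ler_wpM2r ?enorm_ge0 // ler_wpM2l ?ler_nat //.
  by rewrite !mulr_ge0 ?sqr_ge0 // addr_ge0 ?sqr_ge0 // mulr_ge0.
by rewrite mulrDl mul1r lerD // (le_trans gap).
Qed.

Lemma gd_step_radius {t} : (t <= T)%N -> enorm (rl t - r t) <= res_gap_bound t ->
  enorm (th t.+1 - th t) <= Rad / 2.
Proof.
move=> tT gap; apply: (le_trans (gd_step_le t)).
have := ler_wpM2l (mulr_ge0 (mulr_ge0 eta_ge0 gamma_ge0) beta_ge0) (gd_res_le tT gap).
move: radius_step; rewrite !mulrA; lra.
Qed.

Lemma jacobian_close_along {t} : (t <= T)%N ->
  enorm (rl t - r t) <= res_gap_bound t -> enorm (thl t - th t) <= theta_gap_bound t ->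
  jacobian_close_on_step t.
Proof.
move=> tT res_gap theta_gap s s01; apply: Jf_close.
by rewrite [X in _ <= X]splitr enorm_segment_le ?gd_theta_near ?gd_step_radius.
Qed.

Lemma gd_res_le2 {t} : (t <= T)%N ->
  enorm (r t) ^+ 2 <= (1 + eta * gamma ^+ 2 * eps ^+ 2) ^+ t * r0 ^+ 2 -> enorm (r t) <= 2 * r0.
Proof.
move=> tT r_le; rewrite -ler_sqr ?nnegrE ?enorm_ge0 ?mulr_ge0 ?enorm_ge0 //.
apply: (le_trans r_le); rewrite exprMn ler_wpM2r ?sqr_ge0 //.
have x0 : 0 <= eta * gamma ^+ 2 * eps ^+ 2 by rewrite !mulr_ge0 ?sqr_ge0.
have xT : 2 * (eta * gamma ^+ 2 * eps ^+ 2) * T%:R <= 1.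
  by move: horizon; rewrite -!mulrA.
by rewrite (le_trans (expr1D_le2 x0 xT tT)) // expr2; lra.
Qed.

Lemma res_gap_bound_next {t} : (t < T)%N ->
  enorm (r t) ^+ 2 <= (1 + eta * gamma ^+ 2 * eps ^+ 2) ^+ t * r0 ^+ 2 ->
  enorm (rl t - r t) <= res_gap_bound t ->
  enorm (rl t - r t) + eta * gamma ^+ 2 * (eps0 ^+ 2 + beta * eps) * enorm (r t)
    <= res_gap_bound t.+1.
Proof.
move=> /ltnW tT r_sqr gap; set c := eta * gamma ^+ 2 * (eps0 ^+ 2 + beta * eps).
have c0 : 0 <= c by rewrite !mulr_ge0 ?sqr_ge0 // addr_ge0 ?sqr_ge0 // mulr_ge0.
have -> : res_gap_bound t.+1 = res_gap_bound t + c * (2 * r0) by rewrite -natr1 /c; ring.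
by rewrite lerD // ler_wpM2l // gd_res_le2.
Qed.

Lemma theta_gap_bound_next {t} : enorm (rl t) <= r0 ->
  enorm (rl t - r t) <= res_gap_bound t -> enorm (thl t - th t) <= theta_gap_bound t ->
  enorm (thl t - th t)
    + eta * ((eps0 + eps / 2) * (gamma * enorm (rl t)) + beta * (gamma * enorm (rl t - r t)))
    <= theta_gap_bound t.+1.
Proof.
move=> rl_le res_gap theta_gap.
have e0 : 0 <= eps0 + eps / 2 by rewrite addr_ge0 ?divr_ge0.
apply: (le_trans (_ : _ <= theta_gap_bound t
  + eta * ((eps0 + eps / 2) * (gamma * r0) + beta * (gamma * res_gap_bound t)))).
  by rewrite lerD // ler_wpM2l // lerD // !ler_wpM2l.
rewrite -subr_ge0.
have -> : theta_gap_bound t.+1 - (theta_gap_bound t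
    + eta * ((eps0 + eps / 2) * (gamma * r0) + beta * (gamma * res_gap_bound t))) =
  eta * gamma * r0 * (eps / 2 + eta * gamma ^+ 2 * beta * (eps0 ^+ 2 + eps * beta)).
  by rewrite -natr1; field.
apply: mulr_ge0; first by rewrite !mulr_ge0 ?enorm_ge0.
by rewrite addr_ge0 ?divr_ge0 // !mulr_ge0 ?sqr_ge0 // addr_ge0 ?sqr_ge0 // mulr_ge0.
Qed.

Lemma gd_invariant {t} : (t <= T)%N ->
  [/\ enorm (r t) ^+ 2 <= (1 + eta * gamma ^+ 2 * eps ^+ 2) ^+ t * r0 ^+ 2,
      enorm (rl t - r t) <= res_gap_bound t
    & enorm (thl t - th t) <= theta_gap_bound t].
Proof.
elim: t => [_|t IH tT].
  by rewrite lin_res0 /= !subrr !enorm0 expr0 mul1r mulr0n !mulr0 !mul0r.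
have [r_sqr res_gap theta_gap] := IH (ltnW tT).
have close := jacobian_close_along (ltnW tT) res_gap theta_gap.
have rl_le : enorm (rl t) <= r0.
  by rewrite -ler_sqr ?nnegrE ?enorm_ge0 // -lin_res0 lin_res_sqr_le.
split.
- apply: (le_trans (gd_res_sqrS close)).
  rewrite [_ ^+ t.+1]exprS -[(1 + _) * _ * _]mulrA ler_wpM2l //.
  by rewrite addr_ge0 // !mulr_ge0 ?sqr_ge0.
- exact: le_trans (res_gapS close) (res_gap_bound_next tT r_sqr res_gap).
- apply: le_trans (theta_gapS (jacobian_close_start close)) _.
  exact: theta_gap_bound_next.
Qed.

Lemma gd_tracks_linearization {t} : (t <= T)%N ->
  [/\ enorm (th t - theta0) <= Rad / 2, enorm (rl t - r t) <= res_gap_bound t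
    & enorm (thl t - th t) <= theta_gap_bound t].
Proof.
by move=> tT; have [_ res_gap theta_gap] := gd_invariant tT; rewrite gd_theta_near.
Qed.

End GradientDescent.

Theorem theorem3p1 (R : realType) (N n m : nat)
    (f : 'cV[R]_N -> 'cV[R]_n) (Jf : 'cV[R]_N -> 'M[R]_(n, N))
    (A : 'M[R]_(m, n)) (gamma : R) (y : 'cV[R]_m) (theta0 : 'cV[R]_N)
    (J : 'M[R]_(n, N)) (eta beta eps0 eps Rad : R) (T : nat) :
  (forall th, differentiable f th) ->
  (forall th v, 'd f th v = Jf th *m v) ->
  continuous Jf ->
  opnorm A <= gamma ->
  (* A1 *)
  0 < beta -> opnorm J <= beta -> (forall th, opnorm (Jf th) <= beta) ->
  (* A2 *)
  0 < eps0 -> opnorm (Jf theta0 - J) <= eps0 ->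
  opnorm (Jf theta0 *m (Jf theta0)^T - J *m J^T) <= eps0 ^+ 2 ->
  (* A3 *)
  0 < eps -> 0 < Rad ->
  (forall th, enorm (th - theta0) <= Rad -> opnorm (Jf th - Jf theta0) <= eps / 2) ->
  (* T <= 1/(2 eta gamma^2 eps^2) and 0 < eta <= 1/(beta^2 gamma^2) *)
  0 < eta ->
  2 * eta * gamma ^+ 2 * eps ^+ 2 * T%:R <= 1 ->
  eta * beta ^+ 2 * gamma ^+ 2 <= 1 ->
  Rad >= 2 * enorm (gd_res f Jf A y eta theta0 0) *
    Num.max (eta * gamma * beta *
               (1 + 2 * eta * gamma ^+ 2 * (eps0 ^+ 2 + beta * eps) * T%:R))
            (Num.sqrt T%:R *
               (Num.sqrt eta + eta * gamma * Num.sqrt T%:R *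
                  (eps + eps0 + eta * gamma ^+ 2 * beta *
                     (eps0 ^+ 2 + eps * beta) * T%:R))) ->
  forall tau : nat, (tau <= T)%N ->
    [/\ enorm (gd_theta f Jf A y eta theta0 tau - theta0) <= Rad / 2,
        enorm (lin_res f J A y eta theta0 tau - gd_res f Jf A y eta theta0 tau)
          <= 2 * eta * gamma ^+ 2 * (eps0 ^+ 2 + beta * eps) * tau%:R *
             enorm (gd_res f Jf A y eta theta0 0)
      & enorm (lin_theta f J A y eta theta0 tau - gd_theta f Jf A y eta theta0 tau)
          <= eta * gamma * (eps + eps0 + eta * gamma ^+ 2 * beta *
                              (eps0 ^+ 2 + eps * beta) * tau%:R) * tau%:R *
             enorm (gd_res f Jf A y eta theta0 0)].
Proof.
move=> f_diff df _ hA beta_gt0 hJ hJf eps0_gt0 hJ0 hJJ eps_gt0 _ hball eta_gt0 horizon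
  step_size hRad tau tauT.
set r0 := enorm (gd_res f Jf A y eta theta0 0) in hRad *.
have gamma_ge0 := le_trans (opnorm_ge0 A) hA.
set E := eps + eps0 + _ * T%:R in hRad.
set X := eta * gamma * beta * _ in hRad.
set Y := Num.sqrt T%:R * _ in hRad.
have radius_max Z : Z <= Num.max X Y -> 2 * (Z * r0) <= Rad.
  move=> Z_le; apply: le_trans hRad; rewrite [Z * r0]mulrC mulrA.
  by rewrite ler_wpM2l ?mulr_ge0 ?enorm_ge0.
have radius_step : 2 * (X * r0) <= Rad by rewrite radius_max // le_max lexx.
have radius_path : 2 * (Num.sqrt (T%:R * eta) * r0 + eta * gamma * E * T%:R * r0) <= Rad.
  have -> : Num.sqrt (T%:R * eta) * r0 + eta * gamma * E * T%:R * r0 = Y * r0.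
    have sqrtT : Num.sqrt T%:R * Num.sqrt T%:R = T%:R :> R by rewrite -expr2 sqr_sqrtr.
    rewrite /Y sqrtrM // -[X in _ * E * X]sqrtT; ring.
  by rewrite radius_max // le_max lexx orbT.
have Jf_close x (near : enorm (x - theta0) <= Rad) := opnorm_bound (hball x near).
have [near res_gap theta_gap] := gd_tracks_linearization f_diff df gamma_ge0
  (ltW beta_gt0) (ltW eta_gt0) (ltW eps0_gt0) (ltW eps_gt0) (opnorm_bound hA)
  (opnorm_bound hJ) (fun x => opnorm_bound (hJf x)) (opnorm_bound hJ0) (opnorm_bound hJJ)
  step_size Jf_close horizon radius_step radius_path tauT.
by split.
Qed.
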